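(* Let $V$ be an $\mathcal{H}$-module vertex algebra and let $W=\bigoplus_{n\in\mathbb{Z}}W_n$ be a lower truncated $(V,\mathcal{H})$-module. If $(\cdot,\cdot)$ is an invariant bilinear form on $W$, then $(W_m,W_n)=0$ for all $m,n\in\mathbb{Z}$ with $m\ne n$.
   Context: Throughout, $\mathbb{F}$ is an algebraically closed field of odd prime characteristic $p$; vertex algebras and modules are over $\mathbb{F}$. Every vertex algebra $V$ is a module for the bialgebra $\mathcal{B}$ with basis $\{\mathcal{D}^{(n)}\}_{n\in\mathbb{N}}$, $\mathcal{D}^{(m)}\mathcal{D}^{(n)}=\binom{m+n}{n}\mathcal{D}^{(m+n)}$, via $\mathcal{D}^{(n)}v=v_{-n-1}\mathbf{1}$. $\mathcal{H}$: let $\mathfrak{sl}_2$ over $\mathbb{C}$ have basis $L_{-1},L_0,L_1$ with $[L_1,L_{-1}]=2L_0$, $[L_0,L_{\pm1}]=\mp L_{\pm1}$; put $L_{\pm1}^{(n)}=L_{\pm1}^n/n!$, $L_0^{(n)}=\binom{-2L_0}{n}$ in $U(\mathfrak{sl}_2)$; $U(\mathfrak{sl}_2)_{\mathbb{Z}}$ is the $\mathbb{Z}$-span of the $L_{-1}^{(i)}L_0^{(j)}L_1^{(k)}$, and $\mathcal{H}=\mathbb{F}\otimes_{\mathbb{Z}}U(\mathfrak{sl}_2)_{\mathbb{Z}}$. $\theta$ is the anti-automorphism of $\mathcal{H}$ with $\theta(L_{\pm1}^{(n)})=L_{\mp1}^{(n)}$, $\theta(L_0^{(n)})=L_0^{(n)}$.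 $e^{zL_{\pm1}}=\sum_{n\ge0}z^nL_{\pm1}^{(n)}$. For $v$ homogeneous of degree $n$, $f(z)^{\deg}v:=f(z)^nv$, extended linearly. A $\mathbb{Z}$-graded vertex algebra: $V=\bigoplus V_n$, $\mathbf{1}\in V_0$, $u_rV_n\subset V_{m+n-r-1}$ for $u\in V_m$. A $\mathbb{Z}$-graded weight $\mathcal{H}$-module: $W=\bigoplus W_n$ with $\mathcal{H}$-action, $L_{\pm1}^{(r)}W_n\subset W_{n\mp r}$, $L_0^{(r)}|_{W_n}=\binom{-2n}{r}$. An $\mathcal{H}$-module vertex algebra: a $\mathbb{Z}$-graded vertex algebra $V$ which is a $\mathbb{Z}$-graded weight $\mathcal{H}$-module with $L_{-1}^{(n)}=\mathcal{D}^{(n)}$, such that $V_n=0$ for $n\ll0$, $L_1^{(n)}\mathbf{1}=\delta_{n,0}\mathbf{1}$, and $e^{zL_1}Y(v,z_0)e^{-zL_1}=Y\bigl(e^{z(1-zz_0)L_1}(1-zz_0)^{-2\deg}v,z_0/(1-zz_0)\bigr)$ for $v\in V$. A $(V,\mathcal{H})$-module: a $\mathbb{Z}$-graded weight $\mathcal{H}$-module $W$ which is a $\mathbb{Z}$-graded $V$-module ($v_mW_n\subset W_{k+n-m-1}$ for $v\in V_k$) satisfying $e^{zL_{-1}}Y_W(v,x)e^{-zL_{-1}}=Y_W(e^{zL_{-1}}v,x)$ and $e^{zL_1}Y_W(v,z_0)e^{-zL_1}=Y_W\bigl(e^{z(1-zz_0)L_1}(1-zz_0)^{-2\deg}v,z_0/(1-zz_0)\bigr)$;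 it is lower truncated if $W_n=0$ for $n\ll0$. A bilinear form on $W$ is invariant if $(Y_W(v,z)w,w')=(w,Y_W(e^{zL_1}(-z^{-2})^{\deg}v,z^{-1})w')$ and $(aw,w')=(w,\theta(a)w')$ for all $v\in V$, $w,w'\in W$, $a\in\mathcal{H}$. *)

From HB Require Import structures.
From mathcomp Require Import all_boot all_order all_algebra.
Set Implicit Arguments. Unset Strict Implicit. Unset Printing Implicit Defensive.
Import Order.TTheory GRing.Theory Num.Theory.
Local Open Scope ring_scope.

(* Generalized binomial coefficient binom(x, k) = x(x-1)...(x-k+1)/k! for x : int. *)
Definition zbin (x : int) (k : nat) : int :=
  match x with
  | Posz n => ('C(n, k))%:Z
  | Negz n => (-1) ^+ k * ('C(n + k, k))%:Z   (* Negz n = -(n+1) *)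
  end.

Definition zsign (x : int) : int := (-1) ^+ `|x|%N.

Section Defs.
Variable F : fieldType.

Definition is_lin (U W : lmodType F) (f : U -> W) : Prop :=
  forall (a : F) (x y : U), f (a *: x + y) = a *: f x + f y.

(* A Z-graded vector space W = (+)_n W_n, given by its family of projections
   pi n : W -> W_n; W_n = { w | pi n w = w }. *)
Definition graded (W : lmodType F) (pi : int -> W -> W) : Prop :=
  [/\ forall n, is_lin (pi n),
      forall m n w, pi m (pi n w) = if m == n then pi n w else 0 &
      forall w, exists s : seq int,
        [/\ uniq s, forall n, n \notin s -> pi n w = 0 & w = \sum_(n <- s) pi n w]].

Definition homog (W : lmodType F) (pi : int -> W -> W) (n : int) (w : W) : Prop :=
  pi n w = w.

(* A Z-graded weight H-module, H = F (x) U(sl2)_Z.  The action of H is given by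
   the action of its generators L_{-1}^{(r)} (Lm1 r), L_0^{(r)} (L0 r),
   L_1^{(r)} (L1 r).  The relations of H on a weight module are those of
   Lusztig's modified form (with e = L_1, f = -L_{-1}, h = -2 L_0, so that
   h acts on W_n by -2n):  divided power relations, weight shifts, and
   e^(a) f^(b) = sum_j binom(h+a-b, j) f^(b-j) e^(a-j)  on each weight space.
   (Relations among the L_0^{(r)} hold automatically since they act
   diagonally by binom(-2n, r).) *)
Record weightHmod (W : lmodType F) (pi : int -> W -> W)
    (Lm1 L0 L1 : nat -> W -> W) : Prop := {
  wh_graded : graded pi;
  wh_lin_m1 : forall r, is_lin (Lm1 r);
  wh_lin_0 : forall r, is_lin (L0 r);
  wh_lin_1 : forall r, is_lin (L1 r);
  wh_deg_m1 : forall r n w, homog pi n w -> homog pi (n + r%:Z) (Lm1 r w);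
  wh_deg_1 : forall r n w, homog pi n w -> homog pi (n - r%:Z) (L1 r w);
  wh_L0 : forall r n w, homog pi n w -> L0 r w = ((zbin (- (2 * n)) r)%:~R : F) *: w;
  wh_m1_0 : forall w, Lm1 0%N w = w;
  wh_1_0 : forall w, L1 0%N w = w;
  wh_m1_mul : forall a b w, Lm1 a (Lm1 b w) = ('C(a + b, b))%:R *: Lm1 (a + b)%N w;
  wh_1_mul : forall a b w, L1 a (L1 b w) = ('C(a + b, b))%:R *: L1 (a + b)%N w;
  wh_comm : forall a b n w, homog pi n w ->
    L1 a (Lm1 b w) =
    \sum_(j < (minn a b).+1)
       (((-1) ^+ j * zbin (a%:Z - b%:Z - 2 * n) j)%:~R : F)
         *: Lm1 (b - j)%N (L1 (a - j)%N w)
}.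

(* Borcherds (component form of the Jacobi) identity for Y_W with respect to
   Y_V; all sums below are the full (finite) sums once N is beyond the
   truncation bounds. *)
Definition borcherds (V W : lmodType F) (YV : V -> int -> V -> V)
    (YW : V -> int -> W -> W) : Prop :=
  forall (u v : V) (w : W) (m n l : int) (N : nat),
    (forall i : nat, (N <= i)%N ->
       [/\ YV u (l + i%:Z) v = 0, YW v (n + i%:Z) w = 0 & YW u (m + i%:Z) w = 0]) ->
    \sum_(i < N) ((zbin m i)%:~R : F) *: YW (YV u (l + (i : nat)%:Z) v) (m + n - (i : nat)%:Z) w
    = \sum_(i < N) (((-1) ^+ i * zbin l i)%:~R : F) *:
        (YW u (m + l - (i : nat)%:Z) (YW v (n + (i : nat)%:Z) w)
         - ((zsign l)%:~R : F) *: YW v (n + l - (i : nat)%:Z) (YW u (m + (i : nat)%:Z) w)).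

(* Y(v, z) = sum_n Y v n z^{-n-1}, i.e. Y v n = v_n. *)
Definition vertex_algebra (V : lmodType F) (Y : V -> int -> V -> V) (one : V) : Prop :=
  [/\ (forall n v, is_lin (fun u => Y u n v)) /\ (forall u n, is_lin (Y u n)),
      forall u v, exists N : int, forall n, N <= n -> Y u n v = 0,
      forall n v, Y one n v = if n == -1 then v else 0,
      (forall v n, 0 <= n -> Y v n one = 0) /\ (forall v, Y v (-1) one = v) &
      borcherds Y Y].

Definition graded_VA (V : lmodType F) (pi : int -> V -> V)
    (Y : V -> int -> V -> V) (one : V) : Prop :=
  [/\ vertex_algebra Y one, graded pi, homog pi 0 one &
      forall m n r u v, homog pi m u -> homog pi n v ->
        homog pi (m + n - r - 1) (Y u r v)].

(* Component form of
   e^{zL_1} Y(v,z0) e^{-zL_1} = Y(e^{z(1-zz0)L_1}(1-zz0)^{-2deg} v, z0/(1-zz0)),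
   coefficient of z^s z0^{-n-1}, for v homogeneous of degree k. *)
Definition L1_conj (V W : lmodType F) (piV : int -> V -> V)
    (L1V : nat -> V -> V) (YW : V -> int -> W -> W) (L1W : nat -> W -> W) : Prop :=
  forall (s : nat) (k : int) (v : V), homog piV k v -> forall (n : int) (w : W),
    \sum_(a < s.+1) ((-1) ^+ (s - a)%N : F) *: L1W a (YW v n (L1W (s - a)%N w))
    = \sum_(i < s.+1) (((-1) ^+ i * zbin (n + s%:Z + 1 - 2 * k) i)%:~R : F)
        *: YW (L1V (s - i)%N v) (n + (i : nat)%:Z) w.

(* Component form of e^{zL_{-1}} Y_W(v,x) e^{-zL_{-1}} = Y_W(e^{zL_{-1}}v, x),
   coefficient of z^s x^{-n-1}. *)
Definition Lm1_conj (V W : lmodType F) (Lm1V : nat -> V -> V)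
    (YW : V -> int -> W -> W) (Lm1W : nat -> W -> W) : Prop :=
  forall (s : nat) (v : V) (n : int) (w : W),
    \sum_(a < s.+1) ((-1) ^+ (s - a)%N : F) *: Lm1W a (YW v n (Lm1W (s - a)%N w))
    = YW (Lm1V s v) n w.

Record H_module_VA (V : lmodType F) (pi : int -> V -> V)
    (Y : V -> int -> V -> V) (one : V) (Lm1 L0 L1 : nat -> V -> V) : Prop := {
  hva_graded : graded_VA pi Y one;
  hva_weight : weightHmod pi Lm1 L0 L1;
  hva_D : forall r v, Lm1 r v = Y v (- r%:Z - 1) one;
  hva_low : exists N : int, forall n v, n < N -> homog pi n v -> v = 0;
  hva_L1one : forall r, L1 r one = if r == 0%N then one else 0;
  hva_conj : L1_conj pi L1 Y L1
}.

Record VH_module (V : lmodType F) (piV : int -> V -> V)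
    (Y : V -> int -> V -> V) (one : V) (Lm1V L1V : nat -> V -> V)
    (W : lmodType F) (piW : int -> W -> W) (YW : V -> int -> W -> W)
    (Lm1W L0W L1W : nat -> W -> W) : Prop := {
  vhm_weight : weightHmod piW Lm1W L0W L1W;
  vhm_linl : forall n w, is_lin (fun v => YW v n w);
  vhm_linr : forall v n, is_lin (YW v n);
  vhm_trunc : forall v w, exists N : int, forall n, N <= n -> YW v n w = 0;
  vhm_vac : forall n w, YW one n w = if n == -1 then w else 0;
  vhm_borcherds : borcherds Y YW;
  vhm_deg : forall k n m v w, homog piV k v -> homog piW n w ->
        homog piW (k + n - m - 1) (YW v m w);
  vhm_Lm1conj : Lm1_conj Lm1V YW Lm1W;
  vhm_L1conj : L1_conj piV L1V YW L1W
}.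

Definition lower_truncated (W : lmodType F) (pi : int -> W -> W) : Prop :=
  exists N : int, forall n w, n < N -> homog pi n w -> w = 0.

(* The first condition is the component form of
   (Y_W(v,z)w, w') = (w, Y_W(e^{zL_1}(-z^{-2})^{deg} v, z^{-1}) w')
   (coefficient of z^{-m-1}, v of degree k; the sum over j is finite since
   L_1^{(j)} v = 0 for j >= N).  The condition (a w, w') = (w, theta(a) w')
   for all a in H is equivalent (theta being an anti-automorphism and H being
   spanned by products of generators) to the condition on generators. *)
Definition invariant_form (V : lmodType F) (piV : int -> V -> V)
    (L1V : nat -> V -> V) (W : lmodType F) (YW : V -> int -> W -> W)
    (Lm1W L0W L1W : nat -> W -> W) (form : W -> W -> F) : Prop :=
  [/\ (forall a x y z, form (a *: x + y) z = a * form x z + form y z)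
        /\ (forall a x y z, form z (a *: x + y) = a * form z x + form z y),
      forall (k : int) (v : V) (m : int) (w w' : W) (N : nat),
        homog piV k v -> (forall j, (N <= j)%N -> L1V j v = 0) ->
        form (YW v m w) w' =
        ((zsign k)%:~R : F) *
          \sum_(j < N) form w (YW (L1V j v) (2 * k - m - 2 - (j : nat)%:Z) w'),
      forall r w w', form (Lm1W r w) w' = form w (L1W r w'),
      forall r w w', form (L1W r w) w' = form w (Lm1W r w') &
      forall r w w', form (L0W r w) w' = form w (L0W r w')].

End Defs.

(* [L_0^{(r)}] acts on [W_n] by [binom(-2n, r)] and is self-adjoint for an
   invariant form, so if [(W_m, W_n) <> 0] the sequences [r |-> binom(-2m, r)]
   and [r |-> binom(-2n, r)] agree in [F].  In any nonzero ring, whatever its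
   characteristic, this sequence determines the integer: Pascal's rule lets one
   translate both arguments by the same integer, and once [x] is moved to [0],
   [y - x = k > 0] would give [binom(0, k) = 0 <> 1 = binom(k, k)]. *)
From HB Require Import structures.
From mathcomp Require Import all_boot all_order all_algebra.
From mathcomp Require Import zify ring.
Set Implicit Arguments.
Unset Strict Implicit.
Unset Printing Implicit Defensive.

Import Order.TTheory GRing.Theory Num.Theory.
Local Open Scope ring_scope.

Lemma zbin0 (x : int) : zbin x 0 = 1.
Proof. by case: x => n /=; rewrite ?bin0 ?addn0 ?binn ?expr0 ?mul1r. Qed.

Lemma zbinS (x : int) (r : nat) : zbin (x + 1) r.+1 = zbin x r.+1 + zbin x r.
Proof.
case: x => [n|[|k]].
- by rewrite -PoszD addn1 /= binS PoszD.
- have -> : Negz 0 + 1 = 0 by [].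
  by rewrite /= !add0n !binn bin0n /= exprS; ring.
- have -> : Negz k.+1 + 1 = Negz k by rewrite !NegzE; lia.
  by rewrite /= addSn binS addSnnS PoszD exprS; ring.
Qed.

Section BinomialSequence.
Variable R : nzRingType.

Definition same_zbin (x y : int) : Prop :=
  forall r, (zbin x r)%:~R = (zbin y r)%:~R :> R.

Lemma same_zbinD1 x y : same_zbin x y -> same_zbin (x + 1) (y + 1).
Proof. by move=> xy [|r]; rewrite ?zbin0 // !zbinS !intrD !xy. Qed.

Lemma same_zbinB1 x y : same_zbin x y -> same_zbin (x - 1) (y - 1).
Proof.
have zbinB1 z r : zbin (z - 1) r.+1 = zbin z r.+1 - zbin (z - 1) r.
  by rewrite -{2}(subrK 1 z) zbinS addrK.
move=> xy; elim=> [|r IHr]; first by rewrite !zbin0.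
by rewrite !zbinB1 !intrB IHr xy.
Qed.

Lemma same_zbinDr t x y : same_zbin x y -> same_zbin (x + t) (y + t).
Proof.
move=> xy; elim/int_rec: t => [|k IHk|k IHk]; first by rewrite !addr0.
- by rewrite -addn1 PoszD !addrA; exact: same_zbinD1.
- by rewrite -addn1 PoszD opprD !addrA; exact: same_zbinB1.
Qed.

Lemma same_zbin_eq x y : same_zbin x y -> x = y.
Proof.
wlog le_xy : x y / x <= y.
  move=> wlog_le xy; have [/wlog_le->|/ltW/wlog_le yx] := lerP x y => //.
  by apply/esym/yx => r; rewrite xy.
move=> xy; apply/eqP; rewrite eq_le le_xy /=; apply: contraT; rewrite -ltNge => lt_xy.
have [k def_k] : exists k : nat, y - x = k.+1%:Z by exists `|(y - x - 1)%R|%N; lia.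
have := same_zbinDr (- x) xy k.+1; rewrite subrr def_k /= binn bin0n /=.
by move/eqP; rewrite eq_sym oner_eq0.
Qed.

End BinomialSequence.

Section BilinearForm.
Variables (F : fieldType) (W : lmodType F) (form : W -> W -> F).

Lemma form_scalel :
    (forall a x y z, form (a *: x + y) z = a * form x z + form y z) ->
  forall a x z, form (a *: x) z = a * form x z.
Proof.
move=> lin_l a x z.
have form0l : form 0 z = 0.
  apply/(addrI (form 0 z)); rewrite addr0.
  by have := lin_l 1 0 0 z; rewrite scale1r addr0 mul1r.
by rewrite -[a *: x]addr0 lin_l form0l addr0.
Qed.

End BilinearForm.

Theorem lemma4p3 (F : closedFieldType) (p : nat)
  (hp : prime p) (hodd : odd p) (hchar : p \in [pchar F])
  (V : lmodType F) (piV : int -> V -> V) (Y : V -> int -> V -> V) (one : V)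
  (Lm1V L0V L1V : nat -> V -> V)
  (hV : H_module_VA piV Y one Lm1V L0V L1V)
  (W : lmodType F) (piW : int -> W -> W) (YW : V -> int -> W -> W)
  (Lm1W L0W L1W : nat -> W -> W)
  (hW : VH_module piV Y one Lm1V L1V piW YW Lm1W L0W L1W)
  (hlow : lower_truncated piW)
  (form : W -> W -> F)
  (hform : invariant_form piV L1V YW Lm1W L0W L1W form) :
  forall (m n : int) (w w' : W), m != n -> homog piW m w -> homog piW n w' ->
    form w w' = 0.
Proof.
move=> m n w w' neq_mn hw hw'; apply/eqP; apply: contraNT neq_mn => form_neq0.
case: hform => [[lin_l lin_r] _ _ _ L0_selfadjoint].
have hWH := vhm_weight hW.
suff /same_zbin_eq : same_zbin F (- (2 * m)) (- (2 * n)) by move=> ?; apply/eqP; lia.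
move=> r; apply: (mulIf form_neq0).
rewrite -(form_scalel lin_l) -(form_scalel (form := fun x z => form z x) lin_r).
by rewrite -(wh_L0 hWH r hw) -(wh_L0 hWH r hw') L0_selfadjoint.
Qed.
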